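(* Let $n,p\ge1$ and let $\alpha\in\widehat F_{(n,p)}$ be homogeneous of fine degree $\underline{k}$. Assume that each line and each column of $\mathrm{supp}(\underline{k})$ is nonempty. Then $\alpha=0$ unless $\mathrm{supp}(\underline{k})$ satisfies: for all proper subsets $S_1\subset\{1,\dots,n\}$, $S_2\subset\{1,\dots,p\}$ (nonempty with nonempty complements $\bar S_1,\bar S_2$), $\mathrm{supp}(\underline{k})\not\subset(S_1\times S_2)\cup(\bar S_1\times\bar S_2)$.
   Context: Work over a field of characteristic $0$. $F_{(n,p)}$ is the Lie algebra generated by $x_{i,j}$, $(i,j)\in\{1,\dots,n\}\times\{1,\dots,p\}$, with defining relations $[x_{i,j},x_{i',j'}]=0$ whenever $i\ne i'$ and $j\ne j'$; it is graded by the fine degree in $\bigoplus_{(i,j)}\mathbb{N}\epsilon_{(i,j)}$ ($\deg x_{i,j}=\epsilon_{(i,j)}$) and by total degree ($\deg x_{i,j}=1$), and $\widehat F_{(n,p)}$ is its completion for the total degree. For $\underline{k}=\sum k_{(i,j)}\epsilon_{(i,j)}$, $\mathrm{supp}(\underline{k})=\{(i,j)\mid k_{(i,j)}\ne0\}$; the $i$-th column of a set $S$ is $S\cap(\{i\}\times\{1,\dots,p\})$ and the $j$-th line is $S\cap(\{1,\dots,n\}\times\{j\})$. *)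

From mathcomp Require Import all_boot all_algebra.
Set Implicit Arguments. Unset Strict Implicit. Unset Printing Implicit Defensive.
Import GRing.Theory.
Local Open Scope ring_scope.

(* F_(n,p) presented by generators and relations: formal Lie expressions
   modulo the smallest congruence making them a Lie algebra over K in which
   [x_{i,j}, x_{i',j'}] = 0 for i <> i' and j <> j'. *)
Section LieF.
Variables (K : fieldType) (n p : nat).

Inductive lexpr : Type :=
| LGen of 'I_n & 'I_p
| LZero
| LAdd of lexpr & lexpr
| LScale of K & lexpr
| LBr of lexpr & lexpr.

Inductive lie_eq : lexpr -> lexpr -> Prop :=
| le_refl a : lie_eq a a
| le_sym a b : lie_eq a b -> lie_eq b a
| le_trans a b c : lie_eq a b -> lie_eq b c -> lie_eq a c
| le_add a a' b b' : lie_eq a a' -> lie_eq b b' -> lie_eq (LAdd a b) (LAdd a' b')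
| le_scale c a a' : lie_eq a a' -> lie_eq (LScale c a) (LScale c a')
| le_br a a' b b' : lie_eq a a' -> lie_eq b b' -> lie_eq (LBr a b) (LBr a' b')
| le_addA a b c : lie_eq (LAdd a (LAdd b c)) (LAdd (LAdd a b) c)
| le_addC a b : lie_eq (LAdd a b) (LAdd b a)
| le_add0 a : lie_eq (LAdd a LZero) a
| le_addN a : lie_eq (LAdd a (LScale (-1) a)) LZero
| le_scale1 a : lie_eq (LScale 1 a) a
| le_scaleA c d a : lie_eq (LScale c (LScale d a)) (LScale (c * d) a)
| le_scaleDr c a b : lie_eq (LScale c (LAdd a b)) (LAdd (LScale c a) (LScale c b))
| le_scaleDl c d a : lie_eq (LScale (c + d) a) (LAdd (LScale c a) (LScale d a))
| le_brDl a b c : lie_eq (LBr (LAdd a b) c) (LAdd (LBr a c) (LBr b c))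
| le_brDr a b c : lie_eq (LBr a (LAdd b c)) (LAdd (LBr a b) (LBr a c))
| le_brZl c a b : lie_eq (LBr (LScale c a) b) (LScale c (LBr a b))
| le_brZr c a b : lie_eq (LBr a (LScale c b)) (LScale c (LBr a b))
| le_alt a : lie_eq (LBr a a) LZero
| le_jacobi a b c :
    lie_eq (LAdd (LBr a (LBr b c)) (LAdd (LBr b (LBr c a)) (LBr c (LBr a b)))) LZero
| le_rel (i i' : 'I_n) (j j' : 'I_p) :
    i != i' -> j != j' -> lie_eq (LBr (LGen i j) (LGen i' j')) LZero.

Definition fdeg := {ffun 'I_n * 'I_p -> nat}.
Definition fdeg_add (k1 k2 : fdeg) : fdeg := [ffun x => k1 x + k2 x].
Definition fdeg_eps (i : 'I_n) (j : 'I_p) : fdeg :=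
  [ffun x => if x == (i, j) then 1 else 0]%N.

Inductive homog : fdeg -> lexpr -> Prop :=
| h_gen i j : homog (fdeg_eps i j) (LGen i j)
| h_zero k : homog k LZero
| h_add k a b : homog k a -> homog k b -> homog k (LAdd a b)
| h_scale k c a : homog k a -> homog k (LScale c a)
| h_br k1 k2 a b : homog k1 a -> homog k2 b -> homog (fdeg_add k1 k2) (LBr a b).

Definition supp (k : fdeg) : {set 'I_n * 'I_p} := [set x | k x != 0%N].

End LieF.

From mathcomp Require Import all_boot all_algebra.
From Stdlib Require Import Setoid Morphisms.
Set Implicit Arguments. Unset Strict Implicit. Unset Printing Implicit Defensive.
Local Open Scope ring_scope.

(* Put B1 = S1 x S2 and B2 = ~S1 x ~S2.  A generator of B1 and one of B2
   differ in both coordinates, hence commute; by Jacobi, every bracket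
   expression in the generators of B1 then commutes with every bracket
   expression in those of B2.  Now induct on a homogeneous expression of
   fine degree k with supp k inside B1 u B2 meeting both blocks: in a bracket
   [a, b], either the degree of a or of b already meets both blocks (and that
   factor vanishes), or one factor lives on B1 and the other on B2 (and the
   bracket vanishes).  Since every column {i} x {1..p} meets supp k and both S1
   and ~S1 are nonempty, supp k does meet both blocks. *)

#[local] Hint Resolve le_refl : core.

Section LieCongruence.
Variables (K : fieldType) (n p : nat).
Local Notation E := (lexpr K n p).
Local Notation "0" := (LZero K n p).
Local Notation "a ≡ b" := (@lie_eq K n p a b) (at level 70, no associativity).

#[export] Instance lie_eq_Equivalence : Equivalence (@lie_eq K n p).
Proof. by split; [exact: le_refl | exact: le_sym | exact: le_trans]. Qed.

#[export] Instance LAdd_Proper :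
  Proper (@lie_eq K n p ==> @lie_eq K n p ==> @lie_eq K n p) (@LAdd K n p).
Proof. by move=> ? ? ? ? ? ?; apply: le_add. Qed.

#[export] Instance LBr_Proper :
  Proper (@lie_eq K n p ==> @lie_eq K n p ==> @lie_eq K n p) (@LBr K n p).
Proof. by move=> ? ? ? ? ? ?; apply: le_br. Qed.

#[export] Instance LScale_Proper c :
  Proper (@lie_eq K n p ==> @lie_eq K n p) (@LScale K n p c).
Proof. by move=> ? ? ?; apply: le_scale. Qed.

Lemma le_0add (a : E) : LAdd 0 a ≡ a.
Proof. by rewrite le_addC le_add0. Qed.

Lemma le_double0 (a : E) : a ≡ LAdd a a -> a ≡ 0.
Proof. by move=> aa; rewrite -(le_addN a) {2}aa -le_addA le_addN le_add0. Qed.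

Lemma le_br0r (a : E) : LBr a 0 ≡ 0.
Proof. by apply: le_double0; rewrite -le_brDr le_add0. Qed.

Lemma le_br0l (a : E) : LBr 0 a ≡ 0.
Proof. by apply: le_double0; rewrite -le_brDl le_add0. Qed.

Lemma le_scale0 c : LScale c 0 ≡ 0.
Proof. by apply: le_double0; rewrite -le_scaleDr le_add0. Qed.

Lemma le_brC0 (a b : E) : LBr b a ≡ 0 -> LBr a b ≡ 0.
Proof.
move=> ba0; rewrite -(le_alt (LAdd a b)) le_brDl !le_brDr ba0.
by rewrite (le_alt a) (le_alt b) !le_0add le_add0.
Qed.

Lemma le_jacobi0 (a1 a2 b : E) :
  LBr a1 (LBr a2 b) ≡ 0 -> LBr a2 (LBr b a1) ≡ 0 -> LBr b (LBr a1 a2) ≡ 0.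
Proof. by move=> h1 h2; rewrite -(le_jacobi a1 a2 b) h1 h2 !le_0add. Qed.

End LieCongruence.

Section Support.
Variables (K : fieldType) (n p : nat).
Implicit Types (i : 'I_n) (j : 'I_p) (k : fdeg n p).
Implicit Types (B C : {set 'I_n * 'I_p}) (a : lexpr K n p).

Lemma supp_fdeg_add k1 k2 : supp (fdeg_add k1 k2) = supp k1 :|: supp k2.
Proof. by apply/setP => x; rewrite !inE !ffunE addn_eq0 negb_and. Qed.

Lemma supp_fdeg_eps i j : supp (fdeg_eps i j) = [set (i, j)].
Proof. by apply/setP => x; rewrite !inE ffunE; case: (x == (i, j)). Qed.

Fixpoint lexpr_over B a : bool :=
  match a with
  | LGen i j => (i, j) \in B
  | LZero => true
  | LAdd a b | LBr a b => lexpr_over B a && lexpr_over B b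
  | LScale _ a => lexpr_over B a
  end.

Lemma homog_over B k a : homog k a -> supp k \subset B -> lexpr_over B a.
Proof.
move=> hom; elim: hom B => {k a}
  [i j | // | k a b _ IHa _ IHb | // | k1 k2 a b _ IHa _ IHb] B /=.
- by rewrite supp_fdeg_eps sub1set.
- by move=> sub; rewrite IHa // IHb.
- by rewrite supp_fdeg_add subUset => /andP[/IHa -> /IHb ->].
Qed.

End Support.

Lemma subsetU_cases (T : finType) (S A B : {set T}) :
  S \subset A :|: B ->
  [\/ S \subset A, S \subset B | (S :&: A != set0) && (S :&: B != set0)].
Proof.
move=> sub; have [/eqP SA|SA] := eqVneq (S :&: A) set0.
  by constructor 2; move: SA; rewrite setI_eq0 => /setDidPl <-; rewrite subDset.
have [/eqP SB|SB] := eqVneq (S :&: B) set0.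
  by constructor 1; move: SB; rewrite setI_eq0 => /setDidPl <-; rewrite subDset setUC.
by constructor 3; apply/andP.
Qed.

Section SeparatedBlocks.
Variables (K : fieldType) (n p : nat) (B1 B2 : {set 'I_n * 'I_p}).
Local Notation "0" := (LZero K n p).
Local Notation "a ≡ b" := (@lie_eq K n p a b) (at level 70, no associativity).

Hypothesis B12_separated : forall i j i' j',
  (i, j) \in B1 -> (i', j') \in B2 -> i != i' /\ j != j'.

Lemma separated_disjoint : B1 :&: B2 = set0.
Proof.
apply/setP=> [[i j]]; rewrite !inE; apply/andP=> -[h1 h2].
by have [] := B12_separated h1 h2; rewrite eqxx.
Qed.

Lemma br_gen_over0 i j b :
  (i, j) \in B1 -> lexpr_over B2 b -> LBr (LGen K i j) b ≡ 0.
Proof.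
move=> ij; elim: b => [i' j' | | b IHb b' IHb' | c b IHb | b IHb b' IHb'] /=.
- by case/(B12_separated ij) => ii' jj'; apply: le_rel.
- by move=> _; apply: le_br0r.
- by case/andP=> /IHb h /IHb' h'; rewrite le_brDr h h' le_add0.
- by move=> /IHb h; rewrite le_brZr h le_scale0.
- case/andP=> /IHb h /IHb' h'; apply: le_jacobi0.
  + by rewrite (le_brC0 h') le_br0r.
  + by rewrite h le_br0r.
Qed.

Lemma br_over0 a b : lexpr_over B1 a -> lexpr_over B2 b -> LBr a b ≡ 0.
Proof.
move=> + Bb; elim: a => [i j | | a IHa a' IHa' | c a IHa | a IHa a' IHa'] /=.
- by move=> ij; apply: br_gen_over0.
- by move=> _; apply: le_br0l.
- by case/andP=> /IHa h /IHa' h'; rewrite le_brDl h h' le_add0.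
- by move=> /IHa h; rewrite le_brZl h le_scale0.
- case/andP=> /IHa h /IHa' h'; apply: le_brC0; apply: le_jacobi0.
  + by rewrite h' le_br0r.
  + by rewrite (le_brC0 h) le_br0r.
Qed.

Lemma homog_mixed0 k a : homog k a -> supp k \subset B1 :|: B2 ->
  supp k :&: B1 != set0 -> supp k :&: B2 != set0 -> a ≡ 0.
Proof.
elim=> {k a} [i j | // | k a b _ IHa _ IHb | k c a _ IHa | k1 k2 a b ha IHa hb IHb].
- rewrite supp_fdeg_eps => _ /set0Pn[x /setIP[/set1P -> ij1]].
  case/set0Pn=> y /setIP[/set1P -> ij2].
  by move: (B12_separated ij1 ij2); rewrite eqxx; case.
- by move=> sub m1 m2; rewrite IHa // IHb // le_add0.
- by move=> sub m1 m2; rewrite IHa // le_scale0.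
- rewrite supp_fdeg_add subUset => /andP[sub1 sub2] m1 m2.
  have [a1|a2|/andP[ma1 ma2]] := subsetU_cases sub1; last by rewrite IHa // le_br0l.
  all: have [b1|b2|/andP[mb1 mb2]] := subsetU_cases sub2; last by rewrite IHb // le_br0r.
  + case/negP: m2; rewrite -subset0 -separated_disjoint.
    by apply: setSI; rewrite subUset a1 b1.
  + exact: br_over0 (homog_over ha a1) (homog_over hb b2).
  + exact/le_brC0/(br_over0 (homog_over hb b1) (homog_over ha a2)).
  + case/negP: m1; rewrite -subset0 setIC -separated_disjoint.
    by apply: setIS; rewrite subUset a2 b2.
Qed.

End SeparatedBlocks.

Section GridBlocks.
Variables (I J : finType) (S1 : {set I}) (S2 : {set J}).

Lemma setX_setC_separated i j i' j' :
  (i, j) \in setX S1 S2 -> (i', j') \in setX (~: S1) (~: S2) -> i != i' /\ j != j'.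
Proof.
rewrite !inE /= => /andP[i1 j2] /andP[i'1 j'2].
by split; [apply: contraTneq i1 => -> | apply: contraTneq j2 => ->].
Qed.

Lemma columns_meet_setX (A : {set I * J}) :
  (forall i, exists j, (i, j) \in A) ->
  A \subset setX S1 S2 :|: setX (~: S1) (~: S2) ->
  S1 != set0 -> A :&: setX S1 S2 != set0.
Proof.
move=> columns /subsetP sub /set0Pn[i i1]; have [j ijA] := columns i.
apply/set0Pn; exists (i, j); rewrite inE ijA /=.
by move: (sub _ ijA); rewrite !inE /= i1 /= orbF.
Qed.

End GridBlocks.

Theorem lemma1p7 (K : fieldType) (n p : nat) (k : fdeg n p) (alpha : lexpr K n p) :
  [pchar K] =i pred0 ->
  (0 < n)%N -> (0 < p)%N ->
  homog k alpha ->
  (forall i : 'I_n, exists j : 'I_p, (i, j) \in supp k) ->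
  (forall j : 'I_p, exists i : 'I_n, (i, j) \in supp k) ->
  (exists (S1 : {set 'I_n}) (S2 : {set 'I_p}),
     [/\ S1 != set0, ~: S1 != set0, S2 != set0, ~: S2 != set0 &
        supp k \subset setX S1 S2 :|: setX (~: S1) (~: S2)]) ->
  lie_eq alpha (LZero K n p).
Proof.
move=> _ _ _ hom columns _ [S1 [S2 [S1_neq0 S1C_neq0 _ _ sub]]].
apply: (homog_mixed0 (@setX_setC_separated _ _ S1 S2) hom sub).
- exact: columns_meet_setX.
- by apply: columns_meet_setX; rewrite // !setCK setUC.
Qed.
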